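(* Let $\alpha\in\mathbb{R}^+\setminus\mathbb{Q}$ and let $f\colon[0,1)\to\mathbb{R}$ be non-negative and Riemann integrable. Then for every $y\in[0,1)$ the autocorrelation of $\mu_y=\sum_{z\in\mathbb{Z}}f(T_\alpha^z(y))\,\delta_z$ exists and equals $\sum_{z\in\mathbb{Z}}\Big(\int_0^1 f(T_\alpha^{-z}x)\,f(x)\,dx\Big)\delta_z$; in particular it is independent of $y$.
   Context: $T_\alpha(x)=\{x+\alpha\}$ on $[0,1)$, with $\{t\}$ the fractional part. For a measure $\mu$ on $\mathbb{Z}$, $\widetilde{\mu}(A)=\overline{\mu(-A)}$, $\mu|_n$ is the restriction to $\{|x|\le n\}$, and the autocorrelation $\gamma_\mu$ is the vague limit (pointwise convergence of masses at each $z\in\mathbb{Z}$) of $\frac1{2n+1}\mu|_n*\widetilde{\mu|_n}$. *)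

From Stdlib Require Export Reals ZArith.
Open Scope R_scope.

Definition T_iter (alpha : R) (z : Z) (y : R) : R :=
  frac_part (y + IZR z * alpha).

(* A real-valued measure on Z, given by its masses at each point. *)
Definition zmeasure := Z -> R.

Definition mu_y (f : R -> R) (alpha y : R) : zmeasure :=
  fun z => f (T_iter alpha z y).

Definition restr (mu : zmeasure) (n : nat) : zmeasure :=
  fun x => if Z.leb (Z.abs x) (Z.of_nat n) then mu x else 0.

(* tilde mu (A) = conj (mu (-A)); masses are real so conj is the identity *)
Definition tilde (mu : zmeasure) : zmeasure := fun x => mu (- x)%Z.

(* convolution mu * nu at z, for mu supported in {|x| <= n}:
   (mu * nu)({z}) = sum_{|x| <= n} mu(x) nu(z - x) *)
Definition conv_supp (n : nat) (mu nu : zmeasure) : zmeasure :=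
  fun z => sum_f_R0 (fun k => let x := (Z.of_nat k - Z.of_nat n)%Z in
                               mu x * nu (z - x)%Z) (2 * n).

Definition autocorr_approx (mu : zmeasure) (n : nat) : zmeasure :=
  fun z => / INR (2 * n + 1) * conv_supp n (restr mu n) (tilde (restr mu n)) z.

(* gamma is the autocorrelation of mu: vague limit = pointwise convergence of masses *)
Definition is_autocorrelation (mu gamma : zmeasure) : Prop :=
  forall z : Z, Un_cv (fun n => autocorr_approx mu n z) (gamma z).

Definition irrational (a : R) : Prop :=
  ~ exists p q : Z, q <> 0%Z /\ a = IZR p / IZR q.

(* The n-th approximant of the autocorrelation at [z] is, up to [O(|z|)] boundary terms,
   the Birkhoff average of [g t = f {t - z alpha} f t] over the [2n + 1] orbit points
   [T_alpha^x y], [|x| <= n].  So it suffices that the Birkhoff averages of a Riemann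
   integrable function along the irrational rotation converge to its integral uniformly in the
   starting point.  For an arc of length [L] this follows from Dirichlet approximation: if
   [s = |q alpha - p|] is small, the orbit splits into arithmetic progressions of step [s]
   modulo 1, each of which meets the arc at most [L/s + 2] times in one turn.  Linearity
   extends this to step functions, and sandwiching between step functions to Riemann
   integrable functions. *)

From Stdlib Require Import Reals RList ZArith List Lra Lia.
Open Scope R_scope.

Lemma Rabs_le_inv x e : Rabs x <= e -> - e <= x <= e.
Proof. unfold Rabs; destruct Rcase_abs; lra. Qed.

Lemma frac_part_bounds x : 0 <= frac_part x < 1.
Proof. destruct (base_fp x); lra. Qed.

Lemma frac_part_plus_IZR x m : frac_part (x + IZR m) = frac_part x.
Proof.
  symmetry; apply (Int_part_frac_part_spec _ (Int_part x + m)); [apply frac_part_bounds|].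
  rewrite plus_IZR; unfold frac_part; ring.
Qed.

Lemma frac_part_id x : 0 <= x < 1 -> frac_part x = x.
Proof.
  intros Hx; symmetry; apply (Int_part_frac_part_spec _ 0); [exact Hx | simpl; ring].
Qed.

Lemma frac_part_sub1 x : 1 <= x < 2 -> frac_part x = x - 1.
Proof.
  intros Hx; rewrite <- (frac_part_plus_IZR x (-1)), frac_part_id; simpl; lra.
Qed.

Lemma frac_part_plus_frac_part x y : frac_part (frac_part x + y) = frac_part (x + y).
Proof.
  unfold frac_part at 2.
  replace (x - IZR (Int_part x) + y) with ((x + y) + IZR (- Int_part x))
    by (rewrite opp_IZR; ring).
  apply frac_part_plus_IZR.
Qed.

Lemma exists_nat_ge x : exists N : nat, x <= INR N.
Proof.
  destruct (archimed x) as [Hup _]; exists (Z.to_nat (up x)).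
  destruct (Z_lt_le_dec (up x) 0).
  - pose proof (pos_INR (Z.to_nat (up x))).
    assert (IZR (up x) <= IZR (-1)) by (apply IZR_le; lia); simpl in *; lra.
  - rewrite INR_IZR_INZ, Z2Nat.id by lia; lra.
Qed.

Lemma exists_nat_mul_le_lt s : 0 < s -> exists J : nat, INR J * s <= 1 < (INR J + 1) * s.
Proof.
  intros Hs; pose proof (base_Int_part (/ s)) as [H1 H2].
  assert (Hz : (0 <= Int_part (/ s))%Z).
  { assert (Hlt : IZR (-1) < IZR (Int_part (/ s)))
      by (pose proof (Rinv_0_lt_compat s Hs); simpl; lra).
    apply lt_IZR in Hlt; lia. }
  exists (Z.to_nat (Int_part (/ s))); rewrite INR_IZR_INZ, Z2Nat.id by exact Hz.
  apply (Rmult_le_compat_r s) in H1; [|lra].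
  assert (H3 : / s < IZR (Int_part (/ s)) + 1) by lra.
  apply (Rmult_lt_compat_r s) in H3; [|lra].
  rewrite Rinv_l in H1, H3 by lra; lra.
Qed.

Fixpoint sumR (n : nat) (F : nat -> R) : R :=
  match n with O => 0 | S n => sumR n F + F n end.

Lemma sumR_ext n F G : (forall k, (k < n)%nat -> F k = G k) -> sumR n F = sumR n G.
Proof.
  induction n as [|n IH]; simpl; intros H; [reflexivity|].
  rewrite IH by (intros; apply H; lia); rewrite H by lia; reflexivity.
Qed.

Lemma sumR_le n F G : (forall k, (k < n)%nat -> F k <= G k) -> sumR n F <= sumR n G.
Proof.
  induction n as [|n IH]; simpl; intros H; [lra|].
  apply Rplus_le_compat; [apply IH; intros; apply H|apply H]; lia.
Qed.

Lemma sumR_plus n F G : sumR n (fun k => F k + G k) = sumR n F + sumR n G.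
Proof. induction n; simpl; [ring | rewrite IHn; ring]. Qed.

Lemma sumR_minus n F G : sumR n (fun k => F k - G k) = sumR n F - sumR n G.
Proof. induction n; simpl; [ring | rewrite IHn; ring]. Qed.

Lemma sumR_scal n c F : sumR n (fun k => c * F k) = c * sumR n F.
Proof. induction n; simpl; [ring | rewrite IHn; ring]. Qed.

Lemma sumR_const n c : sumR n (fun _ => c) = INR n * c.
Proof. induction n; simpl sumR; [simpl; ring | rewrite IHn, S_INR; ring]. Qed.

Lemma sumR_split m n F : sumR (m + n) F = sumR m F + sumR n (fun k => F (m + k)%nat).
Proof.
  induction n as [|n IH]; simpl.
  - rewrite Nat.add_0_r; ring.
  - rewrite Nat.add_succ_r; simpl; rewrite IH; ring.
Qed.

Lemma sumR_abs n F : Rabs (sumR n F) <= sumR n (fun k => Rabs (F k)).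
Proof.
  induction n; simpl; [rewrite Rabs_R0; lra|].
  eapply Rle_trans; [apply Rabs_triang | lra].
Qed.

Lemma sumR_swap n m (F : nat -> nat -> R) :
  sumR n (fun i => sumR m (fun j => F i j)) = sumR m (fun j => sumR n (fun i => F i j)).
Proof.
  induction n as [|n IH]; simpl.
  - rewrite sumR_const; ring.
  - rewrite IH, <- sumR_plus; reflexivity.
Qed.

Lemma sumR_rev n F : sumR n F = sumR n (fun k => F (n - 1 - k)%nat).
Proof.
  induction n as [|n IH]; [reflexivity|].
  replace (S n) with (1 + n)%nat at 2 by lia.
  rewrite sumR_split; simpl sumR; rewrite IH, Rplus_0_l, Rplus_comm.
  f_equal; [f_equal; lia | apply sumR_ext; intros k _; f_equal; lia].
Qed.

Lemma sumR_le_const n F c : (forall k, (k < n)%nat -> F k <= c) -> sumR n F <= INR n * c.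
Proof. intros H; rewrite <- sumR_const; apply sumR_le, H. Qed.

Lemma sumR_le_shift n m F : (forall k, 0 <= F k <= 1) ->
  sumR n F <= sumR n (fun k => F (m + k)%nat) + INR m.
Proof.
  intros HF.
  assert (Hfirst : sumR m F <= INR m * 1) by (apply sumR_le_const; intros; apply HF).
  assert (Hrest : sumR n F <= sumR (m + n) F).
  { replace (m + n)%nat with (n + m)%nat by lia; rewrite sumR_split.
    assert (0 <= sumR m (fun k => F (n + k)%nat)).
    { rewrite <- (Rmult_0_r (INR m)), <- sumR_const; apply sumR_le; intros; apply HF. }
    lra. }
  rewrite sumR_split in Hrest; lra.
Qed.

Lemma sum_f_R0_sumR F n : sum_f_R0 F n = sumR (S n) F.
Proof. induction n; simpl; [ring | simpl in IHn; rewrite IHn; ring]. Qed.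

(** * Dirichlet approximation *)

Section Dirichlet.
Variable alpha : R.
Hypothesis Hirr : irrational alpha.

Lemma irrational_comb_neq0 (a b : Z) : b <> 0%Z -> IZR a + IZR b * alpha <> 0.
Proof.
  intros Hb H; apply Hirr; exists (- a)%Z, b; split; [exact Hb|].
  apply not_0_IZR in Hb; rewrite opp_IZR; field_simplify_eq; lra.
Qed.

Lemma comb_in_unit_interval_b_neq0 (a b : Z) : 0 < IZR a + IZR b * alpha < 1 -> b <> 0%Z.
Proof.
  intros Hr ->; simpl in Hr.
  assert (0 < a < 1)%Z as [] by (split; apply lt_IZR; lra); lia.
Qed.

(* With [N = Int_part (1/r)], the combination [1 - N r] lies in [0, r) and is
   non-zero by irrationality; either it or [r - (1 - N r)] is at most [r/2]. *)
Lemma irrational_comb_halve (a b : Z) : 0 < IZR a + IZR b * alpha < 1 ->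
  exists a' b' : Z, 0 < IZR a' + IZR b' * alpha <= (IZR a + IZR b * alpha) / 2.
Proof.
  set (r := IZR a + IZR b * alpha); intros Hr.
  set (N := Int_part (/ r)).
  assert (HN : IZR N <= / r < IZR N + 1)
    by (destruct (base_Int_part (/ r)) as [H1 H2]; fold N in H1, H2; lra).
  assert (Hr1 : 1 < / r) by (rewrite <- Rinv_1; apply Rinv_lt_contravar; lra).
  assert (HNr : IZR N * r <= 1 < (IZR N + 1) * r).
  { destruct HN as [HN1 HN2].
    apply (Rmult_le_compat_r r) in HN1; apply (Rmult_lt_compat_r r) in HN2; try lra.
    rewrite Rinv_l in HN1, HN2 by lra; lra. }
  assert (HNpos : (0 < N)%Z) by (apply lt_IZR; lra).
  assert (Hb : b <> 0%Z) by (apply (comb_in_unit_interval_b_neq0 a); exact Hr).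
  assert (Hr' : IZR (1 - N * a) + IZR (- (N * b)) * alpha = 1 - IZR N * r).
  { rewrite minus_IZR, opp_IZR, !mult_IZR; unfold r; simpl; ring. }
  assert (Hr'0 : 1 - IZR N * r <> 0).
  { rewrite <- Hr'; apply irrational_comb_neq0; nia. }
  destruct (Rle_dec (1 - IZR N * r) (r / 2)).
  - exists (1 - N * a)%Z, (- (N * b))%Z; rewrite Hr'; lra.
  - exists ((N + 1) * a - 1)%Z, ((N + 1) * b)%Z.
    rewrite minus_IZR, !mult_IZR, plus_IZR; unfold r in *; simpl; nra.
Qed.

Lemma irrational_small_comb n : exists a b : Z, 0 < IZR a + IZR b * alpha < (/ 2) ^ n.
Proof.
  induction n as [|n [a [b Hab]]].
  - exists (- Int_part alpha)%Z, 1%Z.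
    pose proof (frac_part_bounds alpha) as Hf; unfold frac_part in Hf.
    assert (alpha - IZR (Int_part alpha) <> 0).
    { replace (alpha - IZR (Int_part alpha)) with (IZR (- Int_part alpha) + IZR 1 * alpha)
        by (rewrite opp_IZR; simpl; ring).
      apply irrational_comb_neq0; lia. }
    rewrite opp_IZR; simpl; lra.
  - assert ((/ 2) ^ n <= 1) by (rewrite <- (pow1 n); apply pow_incr; lra).
    destruct (irrational_comb_halve a b) as (a' & b' & Hhalf); [lra|].
    exists a', b'; simpl; lra.
Qed.

Lemma irrational_dirichlet d : 0 < d ->
  exists (q : nat) (p : Z), (1 <= q)%nat /\ 0 < Rabs (INR q * alpha - IZR p) < d.
Proof.
  intros Hd.
  destruct (pow_lt_1_zero (/ 2) ltac:(rewrite Rabs_pos_eq; lra) d Hd) as [n Hn].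
  specialize (Hn n (le_n n)); rewrite Rabs_pos_eq in Hn by (apply pow_le; lra).
  destruct (irrational_small_comb n) as (a & b & Hab).
  assert (Hb : b <> 0%Z).
  { apply (comb_in_unit_interval_b_neq0 a).
    assert ((/ 2) ^ n <= 1) by (rewrite <- (pow1 n); apply pow_incr; lra); lra. }
  destruct (Z_lt_le_dec 0 b).
  - exists (Z.to_nat b), (- a)%Z; split; [lia|].
    rewrite INR_IZR_INZ, Z2Nat.id, opp_IZR, Rabs_pos_eq by lia || lra; lra.
  - exists (Z.to_nat (- b)), a; split; [lia|].
    rewrite INR_IZR_INZ, Z2Nat.id, opp_IZR by lia.
    rewrite Rabs_left; lra.
Qed.
End Dirichlet.

Definition ind_Ico (A B x : R) : R := if Rle_dec A x then if Rlt_dec x B then 1 else 0 else 0.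

Definition ind_arc (a L u : R) : R := if Rlt_dec (frac_part (u - a)) L then 1 else 0.

Lemma ind_Ico_bounds A B x : 0 <= ind_Ico A B x <= 1.
Proof. unfold ind_Ico; destruct Rle_dec; [destruct Rlt_dec|]; lra. Qed.

Lemma ind_arc_bounds a L u : 0 <= ind_arc a L u <= 1.
Proof. unfold ind_arc; destruct Rlt_dec; lra. Qed.

Lemma ind_arc_plus_IZR a L u m : ind_arc a L (u + IZR m) = ind_arc a L u.
Proof.
  unfold ind_arc; replace (u + IZR m - a) with (u - a + IZR m) by ring.
  rewrite frac_part_plus_IZR; reflexivity.
Qed.

Lemma ind_arc_frac_part a L u : ind_arc a L (frac_part u) = ind_arc a L u.
Proof.
  unfold ind_arc; replace (frac_part u - a) with (frac_part u + - a) by ring.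
  rewrite frac_part_plus_frac_part; reflexivity.
Qed.

Lemma ind_arc_compl a L u : 0 <= L <= 1 -> ind_arc a L u + ind_arc (a + L) (1 - L) u = 1.
Proof.
  intros HL; unfold ind_arc.
  replace (u - (a + L)) with (u - a + - L) by ring.
  rewrite <- (frac_part_plus_frac_part (u - a) (- L)).
  pose proof (frac_part_bounds (u - a)) as Hv; set (v := frac_part (u - a)) in *.
  destruct (Rlt_dec v L).
  - rewrite <- (frac_part_plus_IZR (v + - L) 1), frac_part_id by (simpl; lra).
    destruct Rlt_dec; simpl in *; lra.
  - rewrite frac_part_id by lra; destruct Rlt_dec; lra.
Qed.

Lemma ind_Ico_arc a b t : 0 <= a <= b -> b <= 1 -> 0 <= t < 1 ->
  ind_Ico a b t = ind_arc a (b - a) t.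
Proof.
  intros Hab Hb Ht; unfold ind_Ico, ind_arc.
  destruct (Rle_dec a t).
  - rewrite frac_part_id by lra; destruct Rlt_dec; destruct Rlt_dec; lra.
  - rewrite <- (frac_part_plus_IZR (t - a) 1), frac_part_id by (simpl; lra).
    destruct Rlt_dec; simpl in *; lra.
Qed.

(* Invariant: the last hit [m s] lies at least [(hits - 1) s] to the right of [A]. *)
Lemma sum_ind_Ico_progression A B s J : 0 < s ->
  sumR J (fun j => ind_Ico A B (INR j * s)) <= Rmax 0 (B - A) / s + 1.
Proof.
  intros Hs; pose (C J := sumR J (fun j => ind_Ico A B (INR j * s))).
  change (C J <= Rmax 0 (B - A) / s + 1).
  assert (Hlast : forall J, C J = 0 \/ exists m, (m < J)%nat /\ A <= INR m * s < B /\
                          (C J - 1) * s <= INR m * s - A).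
  { induction J0 as [|J0 IH]; [left; reflexivity|].
    change (C (S J0)) with (C J0 + ind_Ico A B (INR J0 * s)).
    unfold ind_Ico; destruct Rle_dec; [destruct Rlt_dec|].
    - right; exists J0; split; [lia|split; [lra|]].
      destruct IH as [-> | (m & Hm & _ & Hm2)]; [lra|].
      assert (INR m + 1 <= INR J0) by (rewrite <- S_INR; apply le_INR; lia); nra.
    - rewrite Rplus_0_r; destruct IH as [|(m & ? & ? & ?)]; [left | right; exists m]; auto.
    - rewrite Rplus_0_r; destruct IH as [|(m & ? & ? & ?)]; [left | right; exists m]; auto. }
  assert (Hdiv : (B - A) / s <= Rmax 0 (B - A) / s)
    by (apply Rmult_le_compat_r; [left; apply Rinv_0_lt_compat|apply Rmax_r]; lra).
  assert (0 <= Rmax 0 (B - A) / s)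
    by (apply Rmult_le_pos; [apply Rmax_l|left; apply Rinv_0_lt_compat; lra]).
  destruct (Hlast J) as [-> | (m & _ & Hm1 & Hm2)]; [lra|].
  assert (C J - 1 < (B - A) / s); [|lra].
  apply (Rmult_lt_reg_r s); [exact Hs|]; unfold Rdiv; rewrite Rmult_assoc, Rinv_l; lra.
Qed.

Lemma sum_ind_Ico_nat A B J : sumR J (fun j => ind_Ico A B (INR j)) <= Rmax 0 (B - A) + 1.
Proof.
  pose proof (sum_ind_Ico_progression A B 1 J Rlt_0_1) as H.
  rewrite (sumR_ext _ _ (fun j => ind_Ico A B (INR j))) in H
    by (intros; rewrite Rmult_1_r; reflexivity).
  unfold Rdiv in H; rewrite Rinv_1, Rmult_1_r in H; exact H.
Qed.

Lemma ind_arc_le_two_Ico a L c x : 0 <= L -> 0 <= x < 1 ->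
  let c0 := frac_part (c - a) in
  ind_arc a L (c + x) <= ind_Ico 0 (L - c0) x + ind_Ico (1 - c0) (Rmin (1 + L - c0) 1) x.
Proof.
  intros HL Hx c0; pose proof (frac_part_bounds (c - a)) as Hc0; fold c0 in Hc0.
  unfold ind_arc.
  replace (c + x - a) with (c - a + x) by ring; rewrite <- frac_part_plus_frac_part; fold c0.
  pose proof (ind_Ico_bounds 0 (L - c0) x).
  pose proof (ind_Ico_bounds (1 - c0) (Rmin (1 + L - c0) 1) x).
  destruct Rlt_dec as [Hlt|]; [|lra].
  destruct (Rlt_dec (c0 + x) 1).
  - rewrite frac_part_id in Hlt by lra.
    unfold ind_Ico at 1; destruct Rle_dec; [destruct Rlt_dec|]; lra.
  - rewrite frac_part_sub1 in Hlt by lra.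
    assert (x < Rmin (1 + L - c0) 1) by (apply Rmin_glb_lt; lra).
    unfold ind_Ico at 2; destruct Rle_dec; [destruct Rlt_dec|]; lra.
Qed.

Lemma sum_ind_arc_progression_pos a L c s J : 0 <= L <= 1 -> 0 < s -> INR J * s <= 1 ->
  sumR J (fun j => ind_arc a L (c + INR j * s)) <= L / s + 2.
Proof.
  intros HL Hs HJ; set (c0 := frac_part (c - a)).
  pose proof (frac_part_bounds (c - a)) as Hc0; fold c0 in Hc0.
  eapply Rle_trans.
  { apply (sumR_le J _ (fun j => ind_Ico 0 (L - c0) (INR j * s) +
                               ind_Ico (1 - c0) (Rmin (1 + L - c0) 1) (INR j * s))).
    intros j Hj; apply ind_arc_le_two_Ico; [lra|split].
    - apply Rmult_le_pos; [apply pos_INR | lra].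
    - assert (INR j + 1 <= INR J) by (rewrite <- S_INR; apply le_INR; lia); nra. }
  rewrite sumR_plus.
  pose proof (sum_ind_Ico_progression 0 (L - c0) s J Hs).
  pose proof (sum_ind_Ico_progression (1 - c0) (Rmin (1 + L - c0) 1) s J Hs).
  assert (Rmax 0 (L - c0 - 0) / s + Rmax 0 (Rmin (1 + L - c0) 1 - (1 - c0)) / s <= L / s).
  { unfold Rdiv; rewrite <- Rmult_plus_distr_r.
    apply Rmult_le_compat_r; [left; apply Rinv_0_lt_compat; lra|].
    unfold Rmax, Rmin; repeat destruct Rle_dec; lra. }
  lra.
Qed.

Lemma sum_ind_arc_progression a L c g J : 0 <= L <= 1 -> g <> 0 -> INR J * Rabs g <= 1 ->
  sumR J (fun j => ind_arc a L (c + INR j * g)) <= L / Rabs g + 2.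
Proof.
  intros HL Hg HJ; destruct (Rlt_dec 0 g).
  - rewrite Rabs_pos_eq in * by lra; apply sum_ind_arc_progression_pos; assumption.
  - rewrite Rabs_left in * by lra.
    destruct J as [|J].
    + simpl; assert (0 <= L / - g) by (apply Rmult_le_pos; [|left; apply Rinv_0_lt_compat]; lra).
      lra.
    + rewrite sumR_rev, (sumR_ext _ _ (fun j => ind_arc a L ((c + INR J * g) + INR j * - g))).
      * apply sum_ind_arc_progression_pos; lra.
      * intros k Hk; f_equal; rewrite !minus_INR, S_INR by lia; simpl; ring.
Qed.

Definition ind_pt (a t : R) : R := if Req_EM_T t a then 1 else 0.

Lemma ind_Ico_mul_split a r b v s t : a <= r <= b -> (forall x, a < x < r -> s x = v) ->
  ind_Ico a b t * s t =
  (ind_Ico r b t * s t + v * ind_Ico a r t) + (s a - v) * (ind_pt a t * ind_Ico a r t).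
Proof.
  intros Hr Hv; unfold ind_Ico, ind_pt.
  destruct (Req_EM_T t a) as [->|Hta];
    repeat destruct Rle_dec; repeat destruct Rlt_dec; try lra.
  rewrite (Hv t) by lra; ring.
Qed.

(** * Step functions and the Riemann integral *)

Fixpoint zip_with (H : R -> R -> R) (l1 l2 : list R) : list R :=
  match l1, l2 with
  | x :: l1', y :: l2' => H x y :: zip_with H l1' l2'
  | _, _ => nil
  end.

Lemma length_zip_with H l1 l2 : length l1 = length l2 -> length (zip_with H l1 l2) = length l1.
Proof.
  revert l2; induction l1 as [|x l1 IH]; intros [|y l2] E; simpl in *; try lia.
  rewrite IH; lia.
Qed.

Lemma pos_Rl_zip_with H l1 l2 i : (i < length l1)%nat -> (i < length l2)%nat ->
  pos_Rl (zip_with H l1 l2) i = H (pos_Rl l1 i) (pos_Rl l2 i).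
Proof.
  revert l2 i; induction l1 as [|x l1 IH]; intros [|y l2] [|i] H1 H2; simpl in *; try lia;
    [reflexivity | apply IH; lia].
Qed.

Lemma adapted_couple_combine H f g a b l lf lg :
  adapted_couple f a b l lf -> adapted_couple g a b l lg ->
  adapted_couple (fun x => H (f x) (g x)) a b l (zip_with H lf lg).
Proof.
  intros (Hord & H0 & H1 & Hlf & Hf) (_ & _ & _ & Hlg & Hg).
  repeat split; try assumption.
  - rewrite length_zip_with; lia.
  - intros i Hi x Hx; rewrite pos_Rl_zip_with by lia.
    rewrite (Hf i Hi x Hx), (Hg i Hi x Hx); reflexivity.
Qed.

Lemma IsStepFun_combine H f g a b :
  IsStepFun f a b -> IsStepFun g a b -> IsStepFun (fun x => H (f x) (g x)) a b.
Proof.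
  intros [lf Hf] [lg Hg]; exists (cons_ORlist lf lg).
  destruct (StepFun_P23 Hf Hg) as [vf Hvf]; destruct (StepFun_P25 Hf Hg) as [vg Hvg].
  exists (zip_with H vf vg); apply adapted_couple_combine; assumption.
Qed.

Lemma IsStepFun_translate h a b d : a <= b ->
  IsStepFun h a b -> IsStepFun (fun t => h (t + d)) (a - d) (b - d).
Proof.
  intros Hab [l [lf (Hord & H0 & H1 & Hlen & Hc)]].
  assert (Hl : (0 < length l)%nat) by (rewrite Hlen; lia).
  exists (map (fun x => x - d) l), lf.
  rewrite Rmin_left in * by lra; rewrite Rmax_right in * by lra.
  repeat split; rewrite ?length_map.
  - intros i Hi; rewrite ?length_map in Hi; rewrite !RList_P12 by lia; specialize (Hord i Hi); lra.
  - rewrite RList_P12, H0, Rmin_left by lra || lia; reflexivity.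
  - rewrite RList_P12, H1, Rmax_right by lra || lia; reflexivity.
  - exact Hlen.
  - intros i Hi x Hx; rewrite ?length_map in Hi; unfold open_interval in Hx.
    rewrite !RList_P12 in Hx by lia.
    apply (Hc i Hi); unfold open_interval; lra.
Qed.

Lemma IsStepFun_ext_open h h' a b : a <= b -> (forall x, a < x < b -> h x = h' x) ->
  IsStepFun h a b -> IsStepFun h' a b.
Proof.
  intros Hab E [l [lf (Hord & H0 & H1 & Hlen & Hc)]]; exists l, lf; repeat split; auto.
  intros i Hi x Hx; unfold open_interval in Hx.
  rewrite Rmin_left in H0 by lra; rewrite Rmax_right in H1 by lra.
  pose proof (proj1 (RList_P6 l) Hord) as Hmono.
  assert (pos_Rl l 0 <= pos_Rl l i) by (apply Hmono; lia).
  assert (pos_Rl l (S i) <= pos_Rl l (pred (length l))) by (apply Hmono; lia).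
  rewrite <- E by lra; apply (Hc i Hi); exact Hx.
Qed.

(* On [0, 1) the rotation [t |-> {t + d}] is the translation by [d] on [0, 1 - d) and
   the translation by [d - 1] on [1 - d, 1). *)
Lemma IsStepFun_rotate s th : IsStepFun s 0 1 -> IsStepFun (fun t => s (frac_part (t + th))) 0 1.
Proof.
  intros Hs; set (d := frac_part th); pose proof (frac_part_bounds th) as Hd; fold d in Hd.
  assert (Hrot : forall t, frac_part (t + th) = frac_part (t + d)).
  { intros t; unfold d; rewrite (Rplus_comm t (frac_part th)), frac_part_plus_frac_part, Rplus_comm.
    reflexivity. }
  apply StepFun_P46 with (1 - d).
  - apply (IsStepFun_ext_open (fun t => s (t + d))); [lra | |].
    + intros x Hx; rewrite Hrot, frac_part_id by lra; reflexivity.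
    + replace 0 with (d - d) by ring.
      apply IsStepFun_translate; [lra | apply StepFun_P45 with 0; [exact Hs | lra]].
  - apply (IsStepFun_ext_open (fun t => s (t + (d - 1)))); [lra | |].
    + intros x Hx; rewrite Hrot, frac_part_sub1 by lra; f_equal; ring.
    + replace (1 - d) with (0 - (d - 1)) by ring; replace 1 with (d - (d - 1)) at 2 by ring.
      apply IsStepFun_translate; [lra | apply StepFun_P44 with 1; [exact Hs | lra]].
Qed.

Fixpoint sum_abs (l : list R) : R :=
  match l with nil => 0 | x :: l' => Rabs x + sum_abs l' end.

Lemma sum_abs_nonneg l : 0 <= sum_abs l.
Proof. induction l; simpl; [lra | pose proof (Rabs_pos a); lra]. Qed.

Lemma adapted_couple_first_piece s a b r r2 l v lf : a <= b ->
  adapted_couple s a b (r :: r2 :: l) (v :: lf) ->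
  r = a /\ a <= r2 <= b /\ (forall x, a < x < r2 -> s x = v) /\
  adapted_couple s r2 b (r2 :: l) lf.
Proof.
  intros Hab Had; pose proof Had as (Hord & H0 & H1 & _ & Hconst).
  simpl in H0; rewrite Rmin_left in H0 by lra; subst r.
  split; [reflexivity | split; [split|split]].
  - apply (Hord 0%nat); simpl; lia.
  - rewrite <- (Rmax_right a b), <- H1 by lra; apply RList_P7; [exact Hord | simpl; auto].
  - intros x Hx; apply (Hconst 0%nat); [simpl; lia | unfold open_interval; simpl; lra].
  - exact (StepFun_P7 Hab Had).
Qed.

Lemma adapted_couple_bound l : forall lf a b s, adapted_couple s a b l lf -> a <= b ->
  forall t, a <= t <= b -> Rabs (s t) <= sum_abs lf + sum_abs (map s l).
Proof.
  induction l as [|r [|r2 l'] IH]; intros lf a b s Had Hab t Ht;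
    pose proof Had as (Hord & H0 & H1 & Hlen & Hconst); simpl in Hlen; [discriminate| |];
    pose proof (sum_abs_nonneg lf).
  - simpl in H0, H1; rewrite Rmin_left in H0 by lra; rewrite Rmax_right in H1 by lra.
    replace t with r by lra; simpl; lra.
  - destruct lf as [|v lf']; [discriminate|].
    destruct (adapted_couple_first_piece _ _ _ _ _ _ _ _ Hab Had) as (-> & Hr2 & Hv & Had').
    simpl sum_abs in *; simpl map; simpl sum_abs.
    pose proof (Rabs_pos v); pose proof (Rabs_pos (s a)); pose proof (Rabs_pos (s r2)).
    pose proof (sum_abs_nonneg lf'); pose proof (sum_abs_nonneg (map s l')).
    destruct (Rle_dec r2 t).
    + specialize (IH lf' r2 b s Had' ltac:(lra) t ltac:(lra)); simpl in IH; lra.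
    + destruct (Req_dec t a) as [->|]; [lra|].
      rewrite Hv by lra; lra.
Qed.

Lemma StepFun_bounded a b (s : StepFun a b) : a <= b ->
  { B : R | forall t, a <= t <= b -> Rabs (s t) <= B }.
Proof.
  intros Hab; exists (sum_abs (subdivision_val s) + sum_abs (map s (subdivision s))).
  apply adapted_couple_bound; [apply StepFun_P1 | exact Hab].
Qed.

Lemma Riemann_integrable_bounded f a b : a <= b -> Riemann_integrable f a b ->
  { B : R | 0 < B /\ forall t, a <= t <= b -> Rabs (f t) <= B }.
Proof.
  intros Hab Hf; destruct (Hf (mkposreal 1 Rlt_0_1)) as [phi [psi [Happrox _]]].
  rewrite Rmin_left, Rmax_right in Happrox by lra.
  destruct (StepFun_bounded a b phi Hab) as [B1 HB1].
  destruct (StepFun_bounded a b psi Hab) as [B2 HB2].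
  exists (B1 + B2 + 1); split.
  - pose proof (HB1 a ltac:(lra)); pose proof (HB2 a ltac:(lra)).
    pose proof (Rabs_pos (phi a)); pose proof (Rabs_pos (psi a)); lra.
  - intros t Ht; specialize (Happrox t Ht); specialize (HB1 t Ht); specialize (HB2 t Ht).
    replace (f t) with ((f t - phi t) + phi t) by ring.
    pose proof (Rabs_triang (f t - phi t) (phi t)); pose proof (Rle_abs (psi t)); lra.
Qed.

Definition clamp (B x : R) : R := Rmax (- B) (Rmin B x).

Lemma clamp_bound B x : 0 <= B -> Rabs (clamp B x) <= B.
Proof. intros HB; unfold clamp, Rmax, Rmin; repeat destruct Rle_dec; apply Rabs_le; lra. Qed.

Lemma clamp_dist B x y : Rabs y <= B -> Rabs (y - clamp B x) <= Rabs (y - x).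
Proof.
  intros Hy; apply Rabs_le_inv in Hy; unfold clamp, Rmax, Rmin.
  repeat destruct Rle_dec; unfold Rabs; repeat destruct Rcase_abs; lra.
Qed.

Lemma Rabs_mul_sub_le x y u v B dx dy : Rabs x <= B -> Rabs v <= B ->
  Rabs (x - u) <= dx -> Rabs (y - v) <= dy -> Rabs (x * y - u * v) <= B * dy + B * dx.
Proof.
  intros Hx Hv Hdx Hdy.
  replace (x * y - u * v) with (x * (y - v) + v * (x - u)) by ring.
  eapply Rle_trans; [apply Rabs_triang|]; rewrite !Rabs_mult.
  apply Rplus_le_compat; apply Rmult_le_compat; auto using Rabs_pos.
Qed.

Lemma Un_cv_const c : Un_cv (fun _ => c) c.
Proof. intros e He; exists 0%nat; intros; unfold Rdist; rewrite Rminus_diag, Rabs_R0; exact He. Qed.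

Lemma RiemannInt_SF_diff_le a b (p1 p2 q1 q2 : StepFun a b) : a <= b ->
  (forall t, a <= t <= b -> Rabs (p1 t - p2 t) <= q1 t + q2 t) ->
  Rabs (RiemannInt_SF p1 - RiemannInt_SF p2) <= RiemannInt_SF q1 + RiemannInt_SF q2.
Proof.
  intros Hab H.
  assert (Hdiff : forall f g : StepFun a b,
            (forall t, a < t < b -> f t + -1 * g t <= q1 t + 1 * q2 t) ->
            RiemannInt_SF f - RiemannInt_SF g <= RiemannInt_SF q1 + RiemannInt_SF q2).
  { intros f g Hfg.
    pose proof (StepFun_P37 (mkStepFun (StepFun_P28 (-1) f g))
                  (mkStepFun (StepFun_P28 1 q1 q2)) Hab Hfg) as Hle.
    rewrite !StepFun_P30 in Hle; lra. }
  apply Rabs_le; split;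
    [cut (RiemannInt_SF p2 - RiemannInt_SF p1 <= RiemannInt_SF q1 + RiemannInt_SF q2); [lra|]|];
    apply Hdiff; intros t Ht; specialize (H t ltac:(lra)); apply Rabs_le_inv in H; lra.
Qed.

(* [RiemannInt pr] is the limit of the integrals of the step functions
   [phi_sequence RinvN pr N], which are [RinvN N]-close to [h]. *)
Lemma RiemannInt_StepFun_approx h a b (pr : Riemann_integrable h a b) (phi psi : StepFun a b) :
  a <= b -> (forall t, a <= t <= b -> Rabs (h t - phi t) <= psi t) ->
  Rabs (RiemannInt pr - RiemannInt_SF phi) <= RiemannInt_SF psi.
Proof.
  intros Hab H; unfold RiemannInt; destruct (RiemannInt_exists pr RinvN RinvN_cv) as [l Hl].
  apply (@Rle_cv_lim (fun N => Rabs (RiemannInt_SF (phi_sequence RinvN pr N) - RiemannInt_SF phi))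
                    (fun N => RinvN N + RiemannInt_SF psi)).
  - intros N; destruct (phi_sequence_prop RinvN pr N) as [psiN [HN1 HN2]].
    rewrite Rmin_left, Rmax_right in HN1 by lra.
    pose proof (Rle_abs (RiemannInt_SF psiN)).
    eapply Rle_trans; [apply (RiemannInt_SF_diff_le a b _ _ psiN psi Hab) | lra].
    intros t Ht; specialize (HN1 t Ht); specialize (H t Ht).
    replace (phi_sequence RinvN pr N t - phi t)
      with (- (h t - phi_sequence RinvN pr N t) + (h t - phi t)) by ring.
    eapply Rle_trans; [apply Rabs_triang | rewrite Rabs_Ropp; lra].
  - apply cv_cvabs, CV_minus; [exact Hl | apply Un_cv_const].
  - rewrite <- (Rplus_0_l (RiemannInt_SF psi)) at 1.
    apply CV_plus; [exact RinvN_cv | apply Un_cv_const].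
Qed.

(** * Uniform convergence of Birkhoff averages *)

Definition birkhoff_avg (alpha : R) (h : R -> R) (n : nat) (w : R) : R :=
  / INR n * sumR n (fun k => h (frac_part (w + INR k * alpha))).

Definition avg_cvg_unif (alpha : R) (h : R -> R) (c : R) : Prop :=
  forall eps, 0 < eps -> exists N : nat, forall n w, (N <= n)%nat ->
    Rabs (birkhoff_avg alpha h n w - c) <= eps.

Section BirkhoffAverages.
Variable alpha : R.

Lemma avg_cvg_unif_ext h1 h2 c : (forall t, 0 <= t < 1 -> h1 t = h2 t) ->
  avg_cvg_unif alpha h1 c -> avg_cvg_unif alpha h2 c.
Proof.
  intros E H eps He; destruct (H eps He) as [N HN]; exists N; intros n w Hn.
  unfold birkhoff_avg; rewrite <- (sumR_ext _ (fun k => h1 (frac_part (w + INR k * alpha)))).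
  - apply HN, Hn.
  - intros k _; apply E, frac_part_bounds.
Qed.

Lemma avg_cvg_unif_lin h1 h2 c1 c2 l : avg_cvg_unif alpha h1 c1 -> avg_cvg_unif alpha h2 c2 ->
  avg_cvg_unif alpha (fun t => h1 t + l * h2 t) (c1 + l * c2).
Proof.
  intros H1 H2 eps He; set (e := eps / (2 * (Rabs l + 1))).
  pose proof (Rabs_pos l).
  assert (Hepos : 0 < e) by (unfold e; apply Rdiv_lt_0_compat; lra).
  assert (Hle : e + Rabs l * e <= eps).
  { assert (e * (Rabs l + 1) = eps / 2) by (unfold e; field; lra); nra. }
  destruct (H1 e Hepos) as [N1 HN1]; destruct (H2 e Hepos) as [N2 HN2].
  exists (max N1 N2); intros n w Hn.
  specialize (HN1 n w ltac:(lia)); specialize (HN2 n w ltac:(lia)).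
  replace (birkhoff_avg alpha (fun t => h1 t + l * h2 t) n w - (c1 + l * c2))
    with ((birkhoff_avg alpha h1 n w - c1) + l * (birkhoff_avg alpha h2 n w - c2))
    by (unfold birkhoff_avg; rewrite sumR_plus, sumR_scal; ring).
  eapply Rle_trans; [apply Rabs_triang|]; rewrite Rabs_mult.
  pose proof (Rmult_le_compat_l _ _ _ (Rabs_pos l) HN2); lra.
Qed.

Lemma avg_cvg_unif_const c : avg_cvg_unif alpha (fun _ => c) c.
Proof.
  intros eps He; exists 1%nat; intros n w Hn.
  replace (birkhoff_avg alpha (fun _ => c) n w) with c.
  - rewrite Rminus_diag, Rabs_R0; lra.
  - unfold birkhoff_avg; rewrite sumR_const; field; apply not_0_INR; lia.
Qed.

Lemma birkhoff_avg_le h1 h2 n w : (forall t, 0 <= t < 1 -> h1 t <= h2 t) ->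
  birkhoff_avg alpha h1 n w <= birkhoff_avg alpha h2 n w.
Proof.
  intros H; unfold birkhoff_avg; apply Rmult_le_compat_l.
  - destruct n; [simpl; rewrite Rinv_0; lra | left; apply Rinv_0_lt_compat, lt_0_INR; lia].
  - apply sumR_le; intros; apply H, frac_part_bounds.
Qed.

Lemma avg_cvg_unif_sandwich h c :
  (forall eps, 0 < eps -> exists hl hu cl cu,
     avg_cvg_unif alpha hl cl /\ avg_cvg_unif alpha hu cu /\
     (forall t, 0 <= t < 1 -> hl t <= h t <= hu t) /\ cl <= c <= cu /\ cu - cl <= eps) ->
  avg_cvg_unif alpha h c.
Proof.
  intros H eps He.
  destruct (H (eps / 2)) as (hl & hu & cl & cu & Hhl & Hhu & Hh & Hc & Hd); [lra|].
  destruct (Hhl (eps / 2)) as [N1 HN1]; [lra|]; destruct (Hhu (eps / 2)) as [N2 HN2]; [lra|].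
  exists (max N1 N2); intros n w Hn.
  specialize (HN1 n w ltac:(lia)); specialize (HN2 n w ltac:(lia)).
  pose proof (birkhoff_avg_le hl h n w ltac:(intros; apply Hh; assumption)).
  pose proof (birkhoff_avg_le h hu n w ltac:(intros; apply Hh; assumption)).
  apply Rabs_le; apply Rabs_le_inv in HN1; apply Rabs_le_inv in HN2; lra.
Qed.

Lemma avg_cvg_unif_unique h c1 c2 :
  avg_cvg_unif alpha h c1 -> avg_cvg_unif alpha h c2 -> c1 = c2.
Proof.
  intros H1 H2; destruct (Req_dec c1 c2) as [|Hne]; [assumption | exfalso].
  pose proof (Rabs_pos_lt (c1 - c2) ltac:(lra)) as Hd.
  destruct (H1 (Rabs (c1 - c2) / 3)) as [N1 HN1]; [lra|].
  destruct (H2 (Rabs (c1 - c2) / 3)) as [N2 HN2]; [lra|].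
  specialize (HN1 (max N1 N2) 0 ltac:(lia)); specialize (HN2 (max N1 N2) 0 ltac:(lia)).
  set (A := birkhoff_avg alpha h (max N1 N2) 0) in *.
  pose proof (Rabs_triang (- (A - c1)) (A - c2)) as Htri.
  replace (- (A - c1) + (A - c2)) with (c1 - c2) in Htri by ring.
  rewrite Rabs_Ropp in Htri; lra.
Qed.

Lemma avg_cvg_unif_rotate h c th :
  avg_cvg_unif alpha h c -> avg_cvg_unif alpha (fun t => h (frac_part (t + th))) c.
Proof.
  intros H eps He; destruct (H eps He) as [N HN]; exists N; intros n w Hn.
  unfold birkhoff_avg; rewrite (sumR_ext _ _ (fun k => h (frac_part (w + th + INR k * alpha)))).
  - apply HN, Hn.
  - intros k _; rewrite frac_part_plus_frac_part; f_equal; f_equal; ring.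
Qed.

End BirkhoffAverages.

Section Equidistribution.
Variable alpha : R.
Hypothesis Hirr : irrational alpha.

(* The indices [j q + k], [j < J], visit the points [w + k alpha + j g] (mod 1), an
   arithmetic progression of step [g]; the first [j q] indices are discarded at unit cost. *)
Lemma sum_ind_arc_orbit_le a L w (q : nat) (p : Z) (J n : nat) :
  let g := INR q * alpha - IZR p in
  0 <= L <= 1 -> g <> 0 -> INR J * Rabs g <= 1 ->
  INR J * sumR n (fun k => ind_arc a L (w + INR k * alpha)) <=
  INR n * (L / Rabs g + 2) + INR J * (INR J * INR q).
Proof.
  intros g HL Hg HJ; set (G k := ind_arc a L (w + INR k * alpha)).
  assert (Hprogression : forall k, sumR J (fun j => G (j * q + k)%nat) <= L / Rabs g + 2).
  { intros k.
    rewrite (sumR_ext _ _ (fun j => ind_arc a L ((w + INR k * alpha) + INR j * g))).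
    - apply sum_ind_arc_progression; assumption.
    - intros j _; unfold G.
      rewrite <- (ind_arc_plus_IZR a L (_ + INR j * g) (Z.of_nat j * p)); f_equal.
      rewrite plus_INR, mult_INR, mult_IZR, <- INR_IZR_INZ; unfold g; ring. }
  rewrite <- sumR_const; eapply Rle_trans.
  { apply (sumR_le J _ (fun j => sumR n (fun k => G (j * q + k)%nat) + INR (j * q))).
    intros j _; apply sumR_le_shift; intros; apply ind_arc_bounds. }
  rewrite sumR_plus, sumR_swap; apply Rplus_le_compat.
  - apply sumR_le_const; intros k _; apply Hprogression.
  - apply sumR_le_const; intros j Hj.
    rewrite mult_INR; apply Rmult_le_compat_r; [apply pos_INR | apply le_INR; lia].
Qed.

Lemma arc_visits_le a L : 0 <= L <= 1 -> forall eps, 0 < eps ->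
  exists N : nat, forall n w, (N <= n)%nat ->
    sumR n (fun k => ind_arc a L (w + INR k * alpha)) <= INR n * (L + eps).
Proof.
  intros HL eps0 Heps0; set (e := Rmin eps0 1).
  assert (He : 0 < e <= 1) by (unfold e, Rmin; destruct Rle_dec; lra).
  assert (Hee : e <= eps0) by apply Rmin_l.
  destruct (irrational_dirichlet alpha Hirr (e / 8)) as (q & p & _ & Hg); [lra|].
  set (g := INR q * alpha - IZR p) in *; set (s := Rabs g) in *.
  assert (Hg0 : g <> 0) by (intros E; unfold s in Hg; rewrite E, Rabs_R0 in Hg; lra).
  destruct (exists_nat_mul_le_lt s) as [J [HJ1 HJ2]]; [lra|].
  assert (HJpos : 0 < INR J) by (destruct J; [simpl in HJ2; lra | apply lt_0_INR; lia]).
  destruct (exists_nat_ge (2 * INR J * INR q / e)) as [N HN].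
  exists N; intros n w Hn.
  pose proof (sum_ind_arc_orbit_le a L w q p J n HL Hg0 HJ1) as Hsum; fold g s in Hsum.
  assert (Hstep : L / s + 2 <= INR J * (L + e / 2)).
  { apply (Rmult_le_reg_r s); [lra|].
    unfold Rdiv; rewrite Rmult_plus_distr_r, Rmult_assoc, Rinv_l by lra; nra. }
  assert (Hshift : INR J * INR q <= INR n * (e / 2)).
  { apply le_INR in Hn.
    assert (2 * INR J * INR q / e * e = 2 * (INR J * INR q)) by (field; lra).
    assert (2 * INR J * INR q / e * e <= INR n * e) by (apply Rmult_le_compat_r; lra).
    lra. }
  apply (Rmult_le_reg_l (INR J)); [exact HJpos|].
  pose proof (Rmult_le_compat_l (INR n) _ _ (pos_INR n) Hstep).
  pose proof (Rmult_le_compat_l (INR J) _ _ (Rlt_le _ _ HJpos) Hshift).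
  assert (0 <= INR J * INR n * (eps0 - e))
    by (apply Rmult_le_pos; [apply Rmult_le_pos; [lra | apply pos_INR] | lra]).
  lra.
Qed.

Lemma avg_cvg_unif_Ico a b : 0 <= a <= b -> b <= 1 -> avg_cvg_unif alpha (ind_Ico a b) (b - a).
Proof.
  intros Hab Hb; set (L := b - a); assert (HL : 0 <= L <= 1) by (unfold L; lra).
  set (S n w := sumR n (fun k => ind_arc a L (w + INR k * alpha))).
  assert (Havg : forall n w, birkhoff_avg alpha (ind_Ico a b) n w = / INR n * S n w).
  { intros n w; unfold birkhoff_avg; f_equal; apply sumR_ext; intros k _.
    rewrite ind_Ico_arc, ind_arc_frac_part by (lra || apply frac_part_bounds); reflexivity. }
  assert (Hcompl : forall n w,
            S n w + sumR n (fun k => ind_arc (a + L) (1 - L) (w + INR k * alpha)) = INR n).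
  { intros n w; unfold S; rewrite <- sumR_plus, <- (Rmult_1_r (INR n)), <- sumR_const.
    apply sumR_ext; intros; apply ind_arc_compl, HL. }
  intros eps He.
  destruct (arc_visits_le a L HL eps He) as [N1 HN1].
  destruct (arc_visits_le (a + L) (1 - L) ltac:(lra) eps He) as [N2 HN2].
  exists (max 1 (max N1 N2)); intros n w Hn; rewrite Havg.
  specialize (HN1 n w ltac:(lia)); specialize (HN2 n w ltac:(lia)); specialize (Hcompl n w).
  assert (Hn0 : 0 < INR n) by (apply lt_0_INR; lia).
  replace (/ INR n * S n w - L) with (/ INR n * (S n w - INR n * L)) by (field; lra).
  rewrite Rabs_mult, Rabs_inv, Rabs_pos_eq by lra.
  apply (Rmult_le_reg_l (INR n)); [exact Hn0|].
  rewrite <- Rmult_assoc, Rinv_r, Rmult_1_l by lra.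
  apply Rabs_le; fold (S n w) in HN1; lra.
Qed.

Lemma avg_cvg_unif_pt a : 0 <= a <= 1 -> avg_cvg_unif alpha (ind_pt a) 0.
Proof.
  intros Ha; apply avg_cvg_unif_sandwich; intros eps He.
  set (lo := Rmax 0 (a - eps / 4)); set (hi := Rmin 1 (a + eps / 4)).
  assert (Hlo : 0 <= lo <= a /\ a - eps / 4 <= lo) by (unfold lo, Rmax; destruct Rle_dec; lra).
  assert (Hhi : a <= hi <= 1 /\ hi <= a + eps / 4) by (unfold hi, Rmin; destruct Rle_dec; lra).
  exists (fun _ => 0), (ind_Ico lo hi), 0, (hi - lo).
  split; [apply avg_cvg_unif_const|]; split; [apply avg_cvg_unif_Ico; lra|].
  split; [|lra].
  intros t Ht; unfold ind_pt, ind_Ico; destruct Req_EM_T as [->|].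
  - destruct Rle_dec; [|lra]; destruct Rlt_dec; [lra|].
    assert (a = 1) by (unfold hi, Rmin in *; destruct Rle_dec; lra); lra.
  - destruct Rle_dec; [destruct Rlt_dec|]; lra.
Qed.

Lemma avg_cvg_unif_pt_Ico a r : 0 <= a <= 1 ->
  avg_cvg_unif alpha (fun t => ind_pt a t * ind_Ico a r t) 0.
Proof.
  intros Ha; apply avg_cvg_unif_sandwich; intros eps He.
  exists (fun _ => 0), (ind_pt a), 0, 0.
  split; [apply avg_cvg_unif_const|]; split; [apply avg_cvg_unif_pt, Ha|].
  split; [|lra]; intros t _.
  pose proof (ind_Ico_bounds a r t); unfold ind_pt; destruct Req_EM_T; lra.
Qed.

Lemma avg_cvg_unif_adapted l : forall lf a b s, adapted_couple s a b l lf ->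
  0 <= a <= b -> b <= 1 -> avg_cvg_unif alpha (fun t => ind_Ico a b t * s t) (Int_SF lf l).
Proof.
  induction l as [|r [|r2 l'] IH]; intros lf a b s Had Hab Hb;
    pose proof Had as (Hord & H0 & H1 & Hlen & Hconst); simpl in Hlen; [discriminate| |].
  - destruct lf; [|discriminate]; simpl in H0, H1.
    rewrite Rmin_left in H0 by lra; rewrite Rmax_right in H1 by lra.
    apply (avg_cvg_unif_ext alpha (fun _ => 0)); [|apply avg_cvg_unif_const].
    intros t _; unfold ind_Ico; destruct Rle_dec; [destruct Rlt_dec|]; lra.
  - destruct lf as [|v lf']; [discriminate|].
    destruct (adapted_couple_first_piece _ _ _ _ _ _ _ _ (proj2 Hab) Had)
      as (-> & Hr2 & Hv & Had').
    pose proof (IH lf' r2 b s Had' ltac:(lra) Hb) as Hrest.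
    apply (avg_cvg_unif_ext alpha
      (fun t => (ind_Ico r2 b t * s t + v * ind_Ico a r2 t) +
                (s a - v) * (ind_pt a t * ind_Ico a r2 t))).
    { intros t _; symmetry; apply ind_Ico_mul_split; [lra | exact Hv]. }
    replace (Int_SF (v :: lf') (a :: r2 :: l'))
      with ((Int_SF lf' (r2 :: l') + v * (r2 - a)) + (s a - v) * 0) by (simpl; ring).
    apply avg_cvg_unif_lin; [apply avg_cvg_unif_lin|]; [exact Hrest | | ].
    + apply avg_cvg_unif_Ico; lra.
    + apply avg_cvg_unif_pt_Ico; lra.
Qed.

Lemma avg_cvg_unif_StepFun (s : StepFun 0 1) : avg_cvg_unif alpha s (RiemannInt_SF s).
Proof.
  unfold RiemannInt_SF; destruct Rle_dec; [|lra].
  apply (avg_cvg_unif_ext alpha (fun t => ind_Ico 0 1 t * s t)).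
  - intros t Ht; unfold ind_Ico; destruct Rle_dec; [destruct Rlt_dec|]; lra.
  - apply avg_cvg_unif_adapted; [apply StepFun_P1 | lra | lra].
Qed.

Lemma avg_cvg_unif_RiemannInt h (pr : Riemann_integrable h 0 1) :
  avg_cvg_unif alpha h (RiemannInt pr).
Proof.
  apply avg_cvg_unif_sandwich; intros eps He.
  destruct (pr (mkposreal (eps / 4) ltac:(lra))) as [phi [psi [Happrox Hpsi]]]; simpl in Hpsi.
  rewrite Rmin_left, Rmax_right in Happrox by lra.
  set (lo := mkStepFun (StepFun_P28 (-1) phi psi)); set (hi := mkStepFun (StepFun_P28 1 phi psi)).
  exists lo, hi, (RiemannInt_SF lo), (RiemannInt_SF hi).
  split; [apply avg_cvg_unif_StepFun|]; split; [apply avg_cvg_unif_StepFun|].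
  pose proof (Rabs_le_inv _ _ (RiemannInt_StepFun_approx h 0 1 pr phi psi ltac:(lra) Happrox)).
  pose proof (Rle_abs (RiemannInt_SF psi)).
  unfold lo, hi; rewrite !StepFun_P30; split; [|lra].
  intros t Ht; specialize (Happrox t ltac:(lra)); apply Rabs_le_inv in Happrox; simpl; lra.
Qed.

(* Rotation invariance of the integral of a step function is read off from the uniqueness
   of the uniform limit of the Birkhoff averages along the irrational rotation. *)
Lemma RiemannInt_SF_rotate (s : StepFun 0 1) th :
  RiemannInt_SF (mkStepFun (IsStepFun_rotate s th (pre s))) = RiemannInt_SF s.
Proof.
  apply (avg_cvg_unif_unique alpha (fun t => s (frac_part (t + th)))).
  - apply (avg_cvg_unif_StepFun (mkStepFun (IsStepFun_rotate s th (pre s)))).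
  - apply avg_cvg_unif_rotate, avg_cvg_unif_StepFun.
Qed.

(* If [|f - phi| <= psi], then [f o rot * f] is approximated by [c o rot * c] with
   [c = clamp B phi], within [B (psi + psi o rot)]. *)
Lemma Riemann_integrable_mul_rotate f th : Riemann_integrable f 0 1 ->
  Riemann_integrable (fun x => f (frac_part (x + th)) * f x) 0 1.
Proof.
  intros Hf; destruct (Riemann_integrable_bounded f 0 1 Rle_0_1 Hf) as [B [HB0 HB]].
  intros eps; pose proof (cond_pos eps).
  destruct (Hf (mkposreal (eps / (4 * B)) ltac:(apply Rdiv_lt_0_compat; lra)))
    as [phi [psi [Happrox Hpsi]]]; simpl in Hpsi.
  rewrite Rmin_left, Rmax_right in Happrox by lra.
  set (c := mkStepFun (IsStepFun_combine (fun u _ => clamp B u) phi phi _ _ (pre phi) (pre phi))).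
  set (crot := mkStepFun (IsStepFun_rotate c th (pre c))).
  set (psirot := mkStepFun (IsStepFun_rotate psi th (pre psi))).
  set (Psi := mkStepFun (StepFun_P28 B (mkStepFun (StepFun_P4 0 1 0))
                           (mkStepFun (StepFun_P28 1 psi psirot)))).
  exists (mkStepFun (IsStepFun_combine Rmult crot c _ _ (pre crot) (pre c))), Psi.
  rewrite Rmin_left, Rmax_right by lra; split.
  - intros t Ht; set (r := frac_part (t + th)).
    assert (Hr : 0 <= r <= 1) by (pose proof (frac_part_bounds (t + th)); unfold r; lra).
    simpl; unfold fct_cte; fold r.
    eapply Rle_trans.
    + apply (Rabs_mul_sub_le _ _ _ _ B (psi r) (psi t));
        [apply HB, Hr | apply clamp_bound; lra | |];
        (eapply Rle_trans; [apply clamp_dist, HB; lra | apply Happrox; lra]).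
    + lra.
  - unfold Psi; rewrite !StepFun_P30, StepFun_P18; unfold psirot; rewrite RiemannInt_SF_rotate.
    replace (0 * (1 - 0) + B * (RiemannInt_SF psi + 1 * RiemannInt_SF psi))
      with (2 * B * RiemannInt_SF psi) by ring.
    rewrite Rabs_mult, Rabs_pos_eq by lra.
    apply (Rmult_lt_compat_l (2 * B)) in Hpsi; [|lra].
    replace (2 * B * (eps / (4 * B))) with (eps / 2) in Hpsi by (field; lra); lra.
Qed.
End Equidistribution.

(** * The autocorrelation *)

Lemma autocorr_term_close f alpha y n (z x : Z) B :
  (Z.abs x <= Z.of_nat n)%Z -> (forall t, 0 <= t <= 1 -> Rabs (f t) <= B) ->
  let mu := mu_y f alpha y in
  let u := frac_part (y + IZR x * alpha) in
  Rabs (restr mu n x * tilde (restr mu n) (z - x)%Z -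
        f (frac_part (u + IZR (- z)%Z * alpha)) * f u)
  <= if Z.leb (Z.abs (x - z)%Z) (Z.of_nat n) then 0 else B * B.
Proof.
  intros Hx HB mu u.
  assert (Hu : 0 <= u <= 1) by (pose proof (frac_part_bounds (y + IZR x * alpha)); unfold u; lra).
  assert (Hrot : frac_part (u + IZR (- z)%Z * alpha) = T_iter alpha (- (z - x))%Z y).
  { unfold u, T_iter; rewrite frac_part_plus_frac_part, !opp_IZR, minus_IZR; f_equal; ring. }
  unfold tilde, restr; rewrite (proj2 (Z.leb_le _ _) Hx), Hrot.
  replace (Z.abs (- (z - x))%Z) with (Z.abs (x - z)%Z) by (f_equal; lia).
  destruct Z.leb.
  - unfold mu, mu_y; fold u; rewrite Rmult_comm, Rminus_diag, Rabs_R0; lra.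
  - rewrite Rmult_0_r, Rminus_0_l, Rabs_Ropp, Rabs_mult.
    apply Rmult_le_compat; try apply Rabs_pos; apply HB; [|exact Hu].
    pose proof (frac_part_bounds (y + IZR (- (z - x))%Z * alpha)); unfold T_iter; lra.
Qed.

Lemma boundary_ind_le (n k : nat) (z : Z) : (k < 2 * n + 1)%nat ->
  (if Z.leb (Z.abs (Z.of_nat k - Z.of_nat n - z)%Z) (Z.of_nat n) then 0 else 1)
  <= ind_Ico 0 (IZR z) (INR k) + ind_Ico (2 * INR n + IZR z + 1) (2 * INR n + 1) (INR k).
Proof.
  intros Hk; destruct (Z.leb_spec (Z.abs (Z.of_nat k - Z.of_nat n - z)) (Z.of_nat n)).
  - pose proof (ind_Ico_bounds 0 (IZR z) (INR k));
      pose proof (ind_Ico_bounds (2 * INR n + IZR z + 1) (2 * INR n + 1) (INR k)); lra.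
  - rewrite !INR_IZR_INZ.
    replace (2 * IZR (Z.of_nat n) + IZR z + 1) with (IZR (2 * Z.of_nat n + z + 1))
      by (rewrite !plus_IZR, mult_IZR; simpl; ring).
    replace (2 * IZR (Z.of_nat n) + 1) with (IZR (2 * Z.of_nat n + 1))
      by (rewrite plus_IZR, mult_IZR; simpl; ring).
    destruct (Z_lt_le_dec (Z.of_nat k) z) as [Hlt|Hge].
    + assert (ind_Ico 0 (IZR z) (IZR (Z.of_nat k)) = 1).
      { unfold ind_Ico; destruct Rle_dec as [|Hneg]; [destruct Rlt_dec as [|Hneg]|];
          [reflexivity | |]; exfalso; apply Hneg; [apply IZR_lt | apply IZR_le]; lia. }
      pose proof (ind_Ico_bounds (IZR (2 * Z.of_nat n + z + 1)) (IZR (2 * Z.of_nat n + 1))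
                    (IZR (Z.of_nat k))); lra.
    + assert (ind_Ico (IZR (2 * Z.of_nat n + z + 1)) (IZR (2 * Z.of_nat n + 1))
                (IZR (Z.of_nat k)) = 1).
      { unfold ind_Ico; destruct Rle_dec as [|Hneg]; [destruct Rlt_dec as [|Hneg]|];
          [reflexivity | |]; exfalso; apply Hneg; [apply IZR_lt | apply IZR_le]; lia. }
      pose proof (ind_Ico_bounds 0 (IZR z) (IZR (Z.of_nat k))); lra.
Qed.

Lemma autocorr_approx_close_avg f alpha y (z : Z) B :
  (forall t, 0 <= t <= 1 -> Rabs (f t) <= B) -> forall n : nat,
  Rabs (autocorr_approx (mu_y f alpha y) n z -
        birkhoff_avg alpha (fun t => f (frac_part (t + IZR (- z) * alpha)) * f t)
          (2 * n + 1) (y - INR n * alpha))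
  <= / INR (2 * n + 1) * (B * B * (Rabs (IZR z) + 2)).
Proof.
  intros HB n; unfold autocorr_approx, birkhoff_avg, conv_supp.
  rewrite sum_f_R0_sumR; replace (S (2 * n)) with (2 * n + 1)%nat by lia.
  assert (Hpos : 0 < / INR (2 * n + 1)) by (apply Rinv_0_lt_compat, lt_0_INR; lia).
  rewrite <- Rmult_minus_distr_l, Rabs_mult, Rabs_pos_eq by lra.
  apply Rmult_le_compat_l; [lra|].
  rewrite <- sumR_minus; eapply Rle_trans; [apply sumR_abs|].
  assert (HBB : 0 <= B * B) by apply Rle_0_sqr.
  eapply Rle_trans.
  { apply (sumR_le _ _ (fun k => B * B * (ind_Ico 0 (IZR z) (INR k) +
                         ind_Ico (2 * INR n + IZR z + 1) (2 * INR n + 1) (INR k)))).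
    intros k Hk; cbv beta zeta.
    replace (y - INR n * alpha + INR k * alpha)
      with (y + IZR (Z.of_nat k - Z.of_nat n) * alpha)
      by (rewrite minus_IZR, <- !INR_IZR_INZ; ring).
    eapply Rle_trans; [apply autocorr_term_close; [lia | exact HB]|].
    pose proof (boundary_ind_le n k z Hk).
    destruct Z.leb; [apply Rmult_le_pos; [exact HBB|] | rewrite <- (Rmult_1_r (B * B)) at 1;
      apply Rmult_le_compat_l; [exact HBB|]]; lra. }
  rewrite sumR_scal, sumR_plus; apply Rmult_le_compat_l; [exact HBB|].
  pose proof (sum_ind_Ico_nat 0 (IZR z) (2 * n + 1)).
  pose proof (sum_ind_Ico_nat (2 * INR n + IZR z + 1) (2 * INR n + 1) (2 * n + 1)).
  assert (Rmax 0 (IZR z - 0) + Rmax 0 (2 * INR n + 1 - (2 * INR n + IZR z + 1)) <= Rabs (IZR z))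
    by (unfold Rmax, Rabs; repeat destruct Rle_dec; destruct Rcase_abs; lra).
  lra.
Qed.

Lemma Un_cv_close_birkhoff_avg (u : nat -> R) alpha h c y K : avg_cvg_unif alpha h c ->
  (forall n : nat, Rabs (u n - birkhoff_avg alpha h (2 * n + 1) (y - INR n * alpha))
                   <= / INR (2 * n + 1) * K) ->
  Un_cv u c.
Proof.
  intros Havg Hclose eps He.
  destruct (Havg (eps / 2)) as [M HM]; [lra|].
  destruct (exists_nat_ge (2 * K / eps)) as [N HN].
  exists (max M N); intros n Hn; unfold Rdist.
  specialize (HM (2 * n + 1)%nat (y - INR n * alpha) ltac:(lia)); specialize (Hclose n).
  assert (Hpos : 0 < INR (2 * n + 1)) by (apply lt_0_INR; lia).
  assert (HNn : INR N + 1 <= INR (2 * n + 1)) by (rewrite <- S_INR; apply le_INR; lia).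
  assert (Hsmall : / INR (2 * n + 1) * K < eps / 2).
  { apply (Rmult_lt_reg_l (INR (2 * n + 1))); [exact Hpos|].
    rewrite <- Rmult_assoc, Rinv_r, Rmult_1_l by lra.
    assert (2 * K / eps * eps = 2 * K) by (field; lra).
    assert (2 * K / eps * eps <= INR N * eps) by (apply Rmult_le_compat_r; lra).
    nra. }
  set (v := birkhoff_avg alpha h (2 * n + 1) (y - INR n * alpha)) in *.
  replace (u n - c) with ((u n - v) + (v - c)) by ring.
  pose proof (Rabs_triang (u n - v) (v - c)); lra.
Qed.

Theorem mainTheorem5 (alpha : R) (f : R -> R)
  (Halpha : 0 < alpha) (Hirr : irrational alpha)
  (Hnn : forall x, 0 <= x < 1 -> 0 <= f x)
  (Hint : Riemann_integrable f 0 1) :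
  forall y, 0 <= y < 1 ->
    exists gamma : zmeasure,
      is_autocorrelation (mu_y f alpha y) gamma /\
      forall z : Z,
        exists pr : Riemann_integrable
                      (fun x => f (T_iter alpha (- z) x) * f x) 0 1,
          gamma z = RiemannInt pr.
Proof.
  intros y _.
  set (pr z := Riemann_integrable_mul_rotate alpha Hirr f (IZR (- z) * alpha) Hint).
  exists (fun z => RiemannInt (pr z)); split; [|intros z; exists (pr z); reflexivity].
  intros z; destruct (Riemann_integrable_bounded f 0 1 Rle_0_1 Hint) as [B [_ HB]].
  apply (Un_cv_close_birkhoff_avg _ alpha (fun t => f (frac_part (t + IZR (- z) * alpha)) * f t)
           _ y (B * B * (Rabs (IZR z) + 2))).
  - apply avg_cvg_unif_RiemannInt, Hirr.
  - apply autocorr_approx_close_avg, HB.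
Qed.
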